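(* Let $G$ be a bipartite graph and let $M$ be a maximum matching in $G$. Then $\alpha(G-M)\le \mathrm{diss}(G)\le \frac{4}{3}\alpha(G-M)$.
   Context: All graphs are finite, simple and undirected. A set $I$ of vertices of a graph $G$ is a dissociation set if the induced subgraph $G[I]$ has maximum degree at most $1$; $\mathrm{diss}(G)$ is the maximum order of a dissociation set in $G$. $\alpha(H)$ denotes the independence number of $H$. For a set $M$ of edges, $G-M$ is the graph on $V(G)$ with edge set $E(G)\setminus M$. *)

From mathcomp Require Import all_boot.
Set Implicit Arguments. Unset Strict Implicit. Unset Printing Implicit Defensive.

Definition simple_graph (T : finType) (e : rel T) : Prop :=
  symmetric e /\ irreflexive e.

Definition bipartite (T : finType) (e : rel T) : Prop :=
  exists c : T -> bool, forall x y, e x y -> c x != c y.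

(* A set of edges M is represented by its symmetric relation m on vertices.
   m is a matching of e: m is symmetric, m is a subrelation of e,
   and each vertex has at most one m-neighbour. *)
Definition matching (T : finType) (e m : rel T) : Prop :=
  symmetric m /\ (forall x y, m x y -> e x y) /\
  (forall x y z, m x y -> m x z -> y = z).

(* number of edges of a symmetric irreflexive relation: ordered pairs / 2 *)
Definition nedges (T : finType) (m : rel T) : nat :=
  #|[set p : T * T | m p.1 p.2]| %/ 2.

Definition maximum_matching (T : finType) (e m : rel T) : Prop :=
  matching e m /\ forall m' : rel T, matching e m' -> nedges m' <= nedges m.

Definition edge_del (T : finType) (e m : rel T) : rel T :=
  fun x y => e x y && ~~ m x y.

Definition independent (T : finType) (e : rel T) (I : {set T}) : bool :=
  [forall x in I, forall y in I, ~~ e x y].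

Definition dissociation (T : finType) (e : rel T) (I : {set T}) : bool :=
  [forall x in I, #|[set y in I | e x y]| <= 1].

Definition alpha (T : finType) (e : rel T) : nat :=
  \max_(I : {set T} | independent e I) #|I|.

Definition diss (T : finType) (e : rel T) : nat :=
  \max_(I : {set T} | dissociation e I) #|I|.

From mathcomp Require Import all_boot perm zify.
Set Implicit Arguments. Unset Strict Implicit. Unset Printing Implicit Defensive.

(* An independent set of G - M is a dissociation set of G, since inside it every
   G-neighbour is an M-neighbour.  Conversely, let D be a maximum dissociation set
   and P the vertices of D whose M-mate lies in D.  Deleting from D the vertices of
   one colour class that have a (G - M)-neighbour in D leaves an independent set of
   G - M, whence 2 alpha >= |D \ P| + 2|P|.  Koenig's alternating-path construction,
   which needs M maximum (Berge), gives an independent set K of G - M into which M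
   matches every vertex outside K; counting mates, 2|K| >= 2|D \ P| + |P|.
   Adding up, 4 alpha >= 3|D|. *)

Lemma cardsD_add (T : finType) (A B : {set T}) :
  B \subset A -> #|A :\: B| + #|B| = #|A|.
Proof. by move=> BA; rewrite -(cardsID B A) (setIidPr BA) addnC. Qed.

Lemma independentP (T : finType) (r : rel T) (I : {set T}) :
  reflect (forall x y, x \in I -> y \in I -> ~~ r x y) (independent r I).
Proof.
apply: (iffP forall_inP) => [h x y xI yI | h x xI].
  by move/forall_inP: (h x xI); apply.
by apply/forall_inP => y; apply: h.
Qed.

Lemma alpha_ge (T : finType) (r : rel T) (I : {set T}) :
  independent r I -> #|I| <= alpha r.
Proof. exact: leq_bigmax_cond. Qed.

Lemma diss_attained (T : finType) (e : rel T) :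
  exists2 D, dissociation e D & diss e = #|D|.
Proof.
have d0 : dissociation e set0 by apply/forall_inP => x; rewrite inE.
rewrite /diss (bigmax_eq_arg set0 d0).
by case: arg_maxnP => // D dD _; exists D.
Qed.

Section Matchings.
Variables (T : finType) (e : rel T).
Hypothesis esym : symmetric e.

Definition free (m : rel T) x := [forall y, ~~ m x y].
Definition arcs (m : rel T) : {set T * T} := [set p | m p.1 p.2].
Definition mate (m : rel T) x := odflt x [pick y | m x y].

Lemma free_rel (m : rel T) x y : free m x -> m x y = false.
Proof. by move/forallP/(_ y)/negbTE. Qed.

Lemma mate_rel (m : rel T) x y : m x y -> m x (mate m x).
Proof. by rewrite /mate; case: pickP => [z hz|->]. Qed.

Lemma mate_notfree (m : rel T) x : ~~ free m x -> m x (mate m x).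
Proof. by rewrite negb_forall => /existsP[y]; rewrite negbK => /mate_rel. Qed.

Lemma mateE (m : rel T) x y : matching e m -> m x y -> mate m x = y.
Proof. by move=> [_ [_ mu]] mxy; apply: mu (mate_rel mxy) mxy. Qed.

Lemma edge_del_sym (m : rel T) : matching e m -> symmetric (edge_del e m).
Proof. by move=> [msym _] x y; rewrite /edge_del esym msym. Qed.

Lemma nedges_lt_arcs (m m' : rel T) :
  #|arcs m| + 2 <= #|arcs m'| -> nedges m < nedges m'.
Proof.
move=> /(leq_div2r 2); rewrite divnDr // divnn addn1.
by rewrite /nedges -/(arcs m) -/(arcs m').
Qed.

Lemma matching_add_edge (m : rel T) a b :
  matching e m -> free m a -> free m b -> e a b -> a != b ->
  exists m', matching e m' /\ #|arcs m| + 2 <= #|arcs m'|.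
Proof.
move=> [msym [me mu]] /free_rel fa /free_rel fb eab nab.
pose m' x y := [|| m x y, (x == a) && (y == b) | (x == b) && (y == a)].
exists m'; split; last first.
  have -> : arcs m' = (a, b) |: ((b, a) |: arcs m).
    apply/setP => [[x y]]; rewrite !inE /m' /= !xpair_eqE.
    by case: (m x y); case: (_ == _); case: (_ == _); case: (_ == _); case: (_ == _).
  by rewrite !cardsU1 !inE /= fa fb /= !xpair_eqE (negbTE nab) /= add1n addnC.
split; [|split].
- move=> x y; rewrite /m' msym.
  by case: (m y x); case: (x == a); case: (y == b); case: (x == b); case: (y == a).
- move=> x y /or3P[/me //|/andP[/eqP-> /eqP->] //|/andP[/eqP-> /eqP->]].
  by rewrite esym.
move=> x y z; rewrite /m'.
case/or3P => [mxy|/andP[/eqP ex /eqP ey]|/andP[/eqP ex /eqP ey]];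
case/or3P => [mxz|/andP[/eqP ex' /eqP ez]|/andP[/eqP ex' /eqP ez]];
subst => //; first exact: mu mxy mxz.
all: first [by move: mxy; rewrite fa | by move: mxy; rewrite fb
          | by move: mxz; rewrite fa | by move: mxz; rewrite fb].
Qed.

(* Conjugating [m] by the transposition (a a1) moves the edge b1-a1 to b1-a. *)
Lemma matching_rematch (m : rel T) a b1 a1 :
  matching e m -> free m a -> m b1 a1 -> e a b1 -> a1 != b1 -> b1 != a ->
  exists m', [/\ matching e m', free m' a1, #|arcs m'| = #|arcs m|,
    (forall x y, x != a -> x != b1 -> y != a -> y != b1 -> m' x y = m x y) &
    (forall x, x != a -> x != a1 -> free m x -> free m' x)].
Proof.
move=> [msym [me mu]] /free_rel fa mba1 eab1 na1b1 nb1a.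
have fa' y : m y a = false by rewrite msym fa.
have ma1b1 : m a1 b1 by rewrite msym.
have naa1 : a != a1 by apply: contraTneq ma1b1 => <-; rewrite fa.
have mate_a1 y : m a1 y -> y = b1 by move=> h; exact: mu h ma1b1.
have mate_a1' y : m y a1 -> y = b1 by rewrite msym => /mate_a1.
pose t := tperm a a1.
have tK : involutive t by exact: tpermK.
have tinj : injective t by exact: can_inj tK.
have tb1 : t b1 = b1 by rewrite tpermD // eq_sym.
exists (fun x y => m (t x) (t y)); split.
- split; first by move=> x y; rewrite msym.
  split; last by move=> x y z h1 h2; apply: tinj; exact: mu h1 h2.
  move=> x y.
  have [-> | nxa] := eqVneq x a.
    by rewrite tpermL => /mate_a1 /(congr1 t); rewrite tK tb1 => ->.
  have [-> | nxa1] := eqVneq x a1; first by rewrite tpermR fa.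
  rewrite (@tpermD _ a a1 x) 1?eq_sym //.
  have [-> | nya] := eqVneq y a; first by rewrite tpermL => /mate_a1' ->; rewrite esym.
  have [-> | nya1] := eqVneq y a1; first by rewrite tpermR fa'.
  by rewrite tpermD 1?eq_sym // => /me.
- by apply/forallP => y; rewrite tpermR fa.
- pose f (p : T * T) := (t p.1, t p.2).
  have finj : injective f by move=> [x1 y1] [x2 y2] [/tinj -> /tinj ->].
  have -> : arcs (fun x y => m (t x) (t y)) = f @^-1: arcs m.
    by apply/setP => p; rewrite !inE.
  exact: card_preimset.
- move=> x y nxa nxb1 nya nyb1.
  have [-> | nxa1] := eqVneq x a1.
    rewrite tpermR fa; case: (boolP (m a1 y)) => // /mate_a1 eyb1.
    by rewrite eyb1 eqxx in nyb1.
  have [-> | nya1] := eqVneq y a1.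
    rewrite tpermR fa'; case: (boolP (m x a1)) => // /mate_a1' exb1.
    by rewrite exb1 eqxx in nxb1.
  by rewrite !tpermD 1?eq_sym.
- move=> x nxa nxa1 /free_rel fx; apply/forallP => y.
  by rewrite tpermD 1?eq_sym // fx.
Qed.

Definition altrel (c : T -> bool) (m : rel T) : rel T :=
  fun x y => if c x then e x y && ~~ m x y else m x y.

Section Augmenting.
Variable c : T -> bool.
Hypothesis bip : forall x y, e x y -> c x != c y.

Lemma alternating_path_augment (m : rel T) a p :
  matching e m -> free m a -> c a -> path (altrel c m) a p -> uniq (a :: p) ->
  ~~ c (last a p) -> free m (last a p) ->
  exists m', matching e m' /\ #|arcs m| + 2 <= #|arcs m'|.
Proof.
have [n] := ubnP (size p); elim: n m a p => // n IH m a [|b1 p] //=; first by move=> _ _ _ ->.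
move=> sz mm fa ca /andP[hab hp] /andP[ap up] nc fl.
have eab1 : e a b1 by move: hab; rewrite /altrel ca => /andP[].
have cb1 : c b1 = false by move: (bip eab1); rewrite ca; case: (c b1).
case: p sz hp ap up nc fl => [|a1 p] sz hp ap up nc fl.
  apply: (matching_add_edge mm fa fl eab1).
  by apply: contraFneq cb1 => /= <-.
move: hp => /= /andP[hb1a1 hp].
have mb1a1 : m b1 a1 by move: hb1a1; rewrite /altrel cb1.
have [_ [me _]] := mm.
have ca1 : c a1 by move: (bip (me _ _ mb1a1)); rewrite cb1; case: (c a1).
have na1b1 : a1 != b1 by apply: contraTneq ca1 => ->; rewrite cb1.
have nb1a : b1 != a by apply: contraFneq cb1 => ->.
have [m' [mm' fa1 card_m' m'E m'free]] :=
  matching_rematch mm fa mb1a1 eab1 na1b1 nb1a.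
move: up => /= /andP[nb1 /andP[na1 up]].
move: ap; rewrite !inE !negb_or => /and3P[_ naa1 nap].
(* After rematching b1 to a, the rest of the path starts at the free vertex a1. *)
rewrite -card_m'; apply: (IH m' a1 p) => //.
- by move: sz; rewrite /= !ltnS => /ltnW.
- rewrite -(@eq_in_path _ [pred x | (x != a) && (x != b1)] (altrel c m)) //.
    by move=> x y /andP[nxa nxb1] /andP[nya nyb1]; rewrite /altrel m'E.
  rewrite /= eq_sym naa1 na1b1 /=.
  apply/allP => x xp /=; apply/andP; split; first by apply: contraNneq nap => <-.
  by apply: contraNneq nb1 => <-; rewrite inE xp orbT.
- by rewrite /= na1.
- have hl : last a1 p \in a1 :: p by exact: mem_last.
  apply: m'free => //.
  + by apply: contraTneq hl => ->; rewrite inE negb_or naa1.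
  + by move: nc => /=; apply: contraNneq => ->.
Qed.

Lemma maximum_matching_no_alternating_path (m : rel T) a y :
  maximum_matching e m -> c a -> free m a -> connect (altrel c m) a y ->
  ~~ c y -> ~~ free m y.
Proof.
move=> [mm mmax] ca fa /connectP[p hp ->] ncy; apply/negP => fy.
case: (shortenP hp) ncy fy => p' hp' up' _ ncy fy.
have [m' [mm' card_m']] := alternating_path_augment mm fa ca hp' up' ncy fy.
by have := mmax m' mm'; rewrite leqNgt nedges_lt_arcs.
Qed.

End Augmenting.

End Matchings.

Section KonigSet.
Variables (T : finType) (e m : rel T) (c : T -> bool).
Hypotheses (esym : symmetric e) (bip : forall x y, e x y -> c x != c y).
Hypothesis maxm : maximum_matching e m.

Definition alt_reach : {set T} :=
  [set y | [exists a, [&& c a, free m a & connect (altrel e c m) a y]]].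

(* [konig_set] is the usual Koenig construction: reached vertices on the
   [c]-side and unreached ones on the other side. *)
Definition konig_set : {set T} := [set x | c x == (x \in alt_reach)].

Lemma konig_setE x : (x \in konig_set) = (c x == (x \in alt_reach)).
Proof. by rewrite inE. Qed.

Lemma alt_reach_step x y : x \in alt_reach -> altrel e c m x y -> y \in alt_reach.
Proof.
rewrite !inE => /existsP[a /and3P[ca fa ax]] xy; apply/existsP; exists a.
by rewrite ca fa (connect_trans ax (connect1 xy)).
Qed.

Lemma alt_reach_free a : c a -> free m a -> a \in alt_reach.
Proof. by move=> ca fa; rewrite inE; apply/existsP; exists a; rewrite ca fa connect0. Qed.

Lemma alt_reach_matched y : y \in alt_reach -> ~~ c y -> ~~ free m y.
Proof.
rewrite inE => /existsP[a /and3P[ca fa ay]].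
exact: (maximum_matching_no_alternating_path esym bip maxm ca fa ay).
Qed.

Lemma konig_set_independent : independent (edge_del e m) konig_set.
Proof.
have reach x y : c x -> x \in alt_reach -> edge_del e m x y -> y \in alt_reach.
  by move=> cx xZ /andP[exy nm]; apply: alt_reach_step xZ _; rewrite /altrel cx exy.
apply/independentP => x y; rewrite !konig_setE => /eqP hx /eqP hy.
apply/negP => exy; have /andP[/bip + _] := exy; rewrite hx hy.
have eyx : edge_del e m y x by rewrite (edge_del_sym esym maxm.1).
case: (boolP (x \in alt_reach)) hx => xZ hx; case: (boolP (y \in alt_reach)) hy => yZ hy //.
- by move: yZ; rewrite (reach x y) ?hx.
- by move: xZ; rewrite (reach y x) ?hy.
Qed.

Lemma konig_set_mate x :
  x \notin konig_set -> m x (mate m x) /\ mate m x \in konig_set.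
Proof.
have [[msym [me _]] _] := maxm.
have side y : m x y -> c y = ~~ c x.
  by move=> /me /bip; case: (c x); case: (c y).
rewrite konig_setE; case: (boolP (c x)) => cx; case: (boolP (x \in alt_reach)) => xZ //= _.
- have mx : m x (mate m x).
    by apply: mate_notfree; apply: contra xZ; exact: alt_reach_free.
  split=> //; rewrite konig_setE side // cx /=; apply: contra xZ => fZ.
  by apply: alt_reach_step fZ _; rewrite /altrel side // cx /= msym.
- have mx : m x (mate m x) by apply: mate_notfree; exact: alt_reach_matched.
  split=> //; rewrite konig_setE side // cx /=.
  by apply: alt_reach_step xZ _; rewrite /altrel (negbTE cx).
Qed.

End KonigSet.

Lemma card_bound_from_injections (T : finType) (D P K : {set T}) (f : T -> T) :
  P \subset D ->
  {in (D :\: P) :\: K &, injective f} -> {in P :\: K &, injective f} ->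
  (forall x, x \in (D :\: P) :\: K -> f x \in K :\: D) ->
  (forall x, x \in P :\: K -> f x \in P :&: K) ->
  2 * #|D :\: P| + #|P| <= 2 * #|K|.
Proof.
move=> PD injX injY fX fY.
have split_DK : #|D :&: K| = #|P :&: K| + #|(D :\: P) :&: K|.
  rewrite -(cardsID P (D :&: K)); congr (_ + _); apply: eq_card => x; rewrite !inE.
    by have := subsetP PD x; case: (x \in P); case: (x \in D); case: (x \in K) => // /(_ isT).
  by case: (x \in P); case: (x \in D); case: (x \in K).
have outside : #|D :&: K| + #|(D :\: P) :\: K| <= #|K|.
  rewrite -(card_in_imset injX) -(cardsID D K) setIC leq_add2l.
  by apply/subset_leq_card/subsetP => _ /imsetP[x xX ->]; exact: fX.
have inside : #|P :\: K| <= #|P :&: K|.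
  rewrite -(card_in_imset injY); apply/subset_leq_card/subsetP => _ /imsetP[x xY ->].
  exact: fY.
have := cardsID K (D :\: P); have := cardsID K P; lia.
Qed.

Section Dissociation.
Variables (T : finType) (e m : rel T).
Hypotheses (esym : symmetric e) (mm : matching e m).

Lemma independent_edge_del_dissociation I :
  independent (edge_del e m) I -> dissociation e I.
Proof.
move/independentP=> indI; apply/forall_inP => x xI.
apply/card_le1_eqP => y z; rewrite !inE => /andP[yI exy] /andP[zI exz].
have := indI x y xI yI; have := indI x z xI zI.
rewrite /edge_del exy exz /= !negbK => mxz mxy.
by have [_ [_ mu]] := mm; exact: mu mxz mxy.
Qed.

Variables (D : {set T}) (c : T -> bool).
Hypotheses (dD : dissociation e D) (bip : forall x y, e x y -> c x != c y).

Definition matched_within : {set T} :=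
  [set x in D | m x (mate m x) && (mate m x \in D)].

Definition side_touched (b : bool) : {set T} :=
  [set u in D | (c u == b) && [exists v in D, edge_del e m u v]].

Lemma matched_within_sub : matched_within \subset D.
Proof. by apply/subsetP => x; rewrite inE => /andP[]. Qed.

Lemma edge_del_notin_matched_within u v :
  u \in D -> v \in D -> edge_del e m u v -> u \notin matched_within.
Proof.
move=> uD vD /andP[euv nmuv]; rewrite inE uD /=; apply/negP => /andP[mu muD].
have := forall_inP dD u uD => /card_le1_eqP eq_nbrs.
have ev : v = mate m u by apply: eq_nbrs; rewrite inE ?vD ?muD //= (proj1 (proj2 mm)).
by rewrite ev mu in nmuv.
Qed.

Lemma side_touched_sub b : side_touched b \subset D :\: matched_within.
Proof.
apply/subsetP => u; rewrite inE => /andP[uD /andP[_ /exists_inP[v vD ed]]].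
by rewrite in_setD uD (edge_del_notin_matched_within uD vD ed).
Qed.

Lemma independent_setD_side_touched b :
  independent (edge_del e m) (D :\: side_touched b).
Proof.
have touched u v : u \in D -> v \in D -> edge_del e m u v -> c u == b ->
    u \in side_touched b.
  by move=> uD vD ed cu; rewrite inE uD cu /=; apply/exists_inP; exists v.
apply/independentP => x y /setDP[xD xQ] /setDP[yD yQ]; apply/negP => ed.
have /andP[/bip cxy _] := ed.
case: (boolP (c x == b)) => cx; first by rewrite (touched x y) in xQ.
have eyx : edge_del e m y x by rewrite (edge_del_sym esym mm).
suff cy : c y == b by rewrite (touched y x) in yQ.
by move: cxy cx; case: (c x); case: (c y); case: (b).
Qed.

Lemma card_side_touched :
  #|side_touched true| + #|side_touched false| <= #|D :\: matched_within|.
Proof.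
rewrite -cardsUI.
have -> : side_touched true :&: side_touched false = set0.
  by apply/setP => x; rewrite !inE; case: (c x); rewrite /= ?andbF.
by rewrite cards0 addn0 subset_leq_card // subUset !side_touched_sub.
Qed.

Lemma dissociation_alpha_bound :
  #|D :\: matched_within| + 2 * #|matched_within| <= 2 * alpha (edge_del e m).
Proof.
have := cardsD_add (subset_trans (side_touched_sub true) (subsetDl _ _)).
have := cardsD_add (subset_trans (side_touched_sub false) (subsetDl _ _)).
have := cardsD_add matched_within_sub.
have := alpha_ge (independent_setD_side_touched true).
have := alpha_ge (independent_setD_side_touched false).
have := card_side_touched.
lia.
Qed.

Lemma dissociation_konig_bound (K : {set T}) :
  (forall x, x \notin K -> m x (mate m x) /\ mate m x \in K) ->
  2 * #|D :\: matched_within| + #|matched_within| <= 2 * #|K|.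
Proof.
move=> hK; have [msym [_ mu]] := mm.
have mate_inj x y : x \notin K -> y \notin K -> mate m x = mate m y -> x = y.
  move=> /hK[mx _] /hK[my _] exy.
  by apply: (mu (mate m x)); rewrite msym // exy.
apply: card_bound_from_injections matched_within_sub _ _ _ _.
- by move=> x y /setDP[_ xK] /setDP[_ yK]; exact: mate_inj.
- by move=> x y /setDP[_ xK] /setDP[_ yK]; exact: mate_inj.
- move=> x /setDP[/setDP[xD xP] /hK[mx mK]]; rewrite inE mK andbT.
  by apply: contra xP => mD; rewrite inE xD mx.
- move=> x /setDP[xP /hK[mx mK]]; rewrite inE mK andbT.
  move: (xP); rewrite inE => /and3P[xD _ mD].
  have mmx : m (mate m x) x by rewrite msym.
  by rewrite inE mD (mateE mm mmx) mmx xD.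
Qed.

End Dissociation.

Theorem mainTheorem2 (T : finType) (e m : rel T) :
  simple_graph e -> bipartite e -> maximum_matching e m ->
  alpha (edge_del e m) <= diss e /\ 3 * diss e <= 4 * alpha (edge_del e m).
Proof.
move=> [esym _] [c bip] maxm; have mm := maxm.1.
split.
  apply/bigmax_leqP => I /(independent_edge_del_dissociation mm).
  exact: leq_bigmax_cond.
have [D dD ->] := diss_attained e.
have := dissociation_alpha_bound esym mm dD bip.
have := dissociation_konig_bound mm D (konig_set_mate esym bip maxm).
have := alpha_ge (konig_set_independent esym bip maxm).
have := cardsD_add (matched_within_sub m D).
lia.
Qed.
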